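(* Let $A\in\mathbb{R}^{n\times n}$, $B\in\mathbb{R}^{n\times m}$, $Q=Q^T\succeq0$, $R=R^T\succ0$, and consider $\dot{\mathbf{x}}=A\mathbf{x}+B\mathbf{u}$, $\mathbf{x}(t_0)=\mathbf{x}_0$, with cost $J(\mathbf{u})=\int_{t_0}^\infty(\mathbf{x}^TQ\mathbf{x}+\mathbf{u}^TR\mathbf{u})dt$ and optimal cost $J^*$. Let $\Gamma(X)=A^TX+XA+Q$ and $\Upsilon(\Psi,\Phi)=(\Psi+\Psi^T)BR^{-1}B^T(\Phi+\Phi^T)$. Let $P\in\mathbb{R}^{n\times n}$ and $\bar P=\bar P^T\succ0$ satisfy $$\begin{bmatrix}\Gamma(P) & (P+P^T)B & 0&0\\ B^T(P+P^T) & 4R&0&0\\ 0&0&-\Gamma(\bar P) & (P+P^T-\bar P-\bar P^T)B\\ 0&0&B^T(P+P^T-\bar P-\bar P^T) & 4R\end{bmatrix}\succ0,$$ suppose $A-\tfrac12\Upsilon(I,P)$ is Hurwitz, and suppose the function $s(\mathbf{x},\mathbf{u})=\frac{\partial q}{\partial\mathbf{x}}(A\mathbf{x}+B\mathbf{u})+\mathbf{x}^TQ\mathbf{x}+\mathbf{u}^TR\mathbf{u}$ with $q(\mathbf{x})=\mathbf{x}^T(P-\bar P)\mathbf{x}$ is strictly convex in $(\mathbf{x},\mathbf{u})$. Then: (1) $q=\mathbf{x}^T(P-\bar P)\mathbf{x}$ is a solving function for the $\epsilon$-suboptimal LQR problem; (2) the control law $\mathbf{u}=-\tfrac12R^{-1}B^T(P+P^T)\mathbf{x}$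 is $\epsilon$-suboptimal with $\epsilon=\mathbf{x}_0^T\bar P\mathbf{x}_0-J^*$, i.e. $J(\mathbf{u})<\mathbf{x}_0^T\bar P\mathbf{x}_0$.
   Context: Matrix inequalities are in the Loewner sense. A control law is $\epsilon$-suboptimal if its cost satisfies $J(\mathbf{u})<J^*+\epsilon$. Krotov framework: for a Krotov function $q(\mathbf{x},t)$ the cost is rewritten as $q(\mathbf{x}_0,t_0)+\int s\,dt+s_f$ with $s=\partial q/\partial t+\frac{\partial q}{\partial\mathbf{x}}(A\mathbf{x}+B\mathbf{u})+\mathbf{x}^TQ\mathbf{x}+\mathbf{u}^TR\mathbf{u}$, $s_f=-q(\mathbf{x}(t_f),t_f)$, $t_f\to\infty$; $q$ is called a solving function whenever an optimal or suboptimal process is obtained directly (noniteratively) from it. Note $\Upsilon(I,P)=2BR^{-1}B^T(P+P^T)$. *)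

From HB Require Import structures.
From mathcomp Require Import all_boot all_order all_algebra.
From mathcomp Require Import all_classical all_reals all_analysis.
From mathcomp Require Import complex.
Set Implicit Arguments. Unset Strict Implicit. Unset Printing Implicit Defensive.
Import Order.TTheory GRing.Theory Num.Theory.
Local Open Scope ring_scope.

Definition qform (R : realType) (n : nat) (M : 'M[R]_n) (x : 'cV[R]_n) : R :=
  (x^T *m M *m x) 0 0.

(* M ≻ 0 : x^T M x > 0 for all x ≠ 0 (symmetry is imposed separately when the
   paper requires it). *)
Definition posdef (R : realType) (n : nat) (M : 'M[R]_n) : Prop :=
  forall x : 'cV[R]_n, x != 0 -> 0 < qform M x.

Definition possemidef (R : realType) (n : nat) (M : 'M[R]_n) : Prop :=
  forall x : 'cV[R]_n, 0 <= qform M x.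

Definition hurwitz (R : realType) (n : nat) (M : 'M[R]_n) : Prop :=
  forall z : R[i], eigenvalue (map_mx (@real_complex R) M) z -> Re z < 0.

Definition Gamma (R : realType) (n : nat) (A Q X : 'M[R]_n) : 'M[R]_n :=
  A^T *m X + X *m A + Q.

Definition Upsilon (R : realType) (n m : nat) (B : 'M[R]_(n, m)) (Rm : 'M[R]_m)
  (Psi Phi : 'M[R]_n) : 'M[R]_n :=
  (Psi + Psi^T) *m B *m invmx Rm *m B^T *m (Phi + Phi^T).

Definition lmi_matrix (R : realType) (n m : nat) (A : 'M[R]_n) (B : 'M[R]_(n, m))
  (Q : 'M[R]_n) (Rm : 'M[R]_m) (P Pb : 'M[R]_n) : 'M[R]_((n + m) + (n + m)) :=
  block_mx
    (block_mx (Gamma A Q P) ((P + P^T) *m B) (B^T *m (P + P^T)) (4%:R *: Rm))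
    0 0
    (block_mx (- Gamma A Q Pb) ((P + P^T - Pb - Pb^T) *m B)
              (B^T *m (P + P^T - Pb - Pb^T)) (4%:R *: Rm)).

(* s(x,u) = dq/dx (Ax+Bu) + x^T Q x + u^T R u with q(x) = x^T (P - Pb) x,
   so dq/dx = x^T ((P - Pb) + (P - Pb)^T). *)
Definition s_fun (R : realType) (n m : nat) (A : 'M[R]_n) (B : 'M[R]_(n, m))
  (Q : 'M[R]_n) (Rm : 'M[R]_m) (P Pb : 'M[R]_n) (x : 'cV[R]_n) (u : 'cV[R]_m) : R :=
  (x^T *m ((P - Pb) + (P - Pb)^T) *m (A *m x + B *m u)) 0 0
  + qform Q x + qform Rm u.

Definition strictly_convex_xu (R : realType) (n m : nat)
  (f : 'cV[R]_n -> 'cV[R]_m -> R) : Prop :=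
  forall (x1 x2 : 'cV[R]_n) (u1 u2 : 'cV[R]_m) (l : R),
    (x1 != x2 \/ u1 != u2) -> 0 < l -> l < 1 ->
    f (l *: x1 + (1 - l) *: x2) (l *: u1 + (1 - l) *: u2)
      < l * f x1 u1 + (1 - l) * f x2 u2.

Definition control_law (R : realType) (n m : nat) (B : 'M[R]_(n, m)) (Rm : 'M[R]_m)
  (P : 'M[R]_n) (x : 'cV[R]_n) : 'cV[R]_m :=
  - (2%:R^-1 *: (invmx Rm *m B^T *m (P + P^T) *m x)).

(* Infinite-horizon cost J(u) = ∫_{t0}^∞ (x^T Q x + u^T R u) dt, as an
   extended real (the integrand is nonnegative). *)
Definition cost (R : realType) (n m : nat) (Q : 'M[R]_n) (Rm : 'M[R]_m)
  (t0 : R) (x : R -> 'cV[R]_n) (u : R -> 'cV[R]_m) : \bar R :=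
  (\int[lebesgue_measure]_(t in `[t0, +oo[%classic) (qform Q (x t) + qform Rm (u t))%:E)%E.

From HB Require Import structures.
From mathcomp Require Import all_boot all_order all_algebra.
From mathcomp Require Import all_classical all_reals all_analysis.
From mathcomp Require Import complex.
From mathcomp Require Import ring lra.
From mathcomp Require Import measurable_realfun.
Import Order.TTheory GRing.Theory Num.Theory.
Local Open Scope ring_scope.

(* Evaluated at (v, u/2), where
   u = K v with K = -1/2 R^-1 B^T (P + P^T), and using B^T (P + P^T) = -2 R K, it says
   that along the closed loop x' = (A + B K) x the function V(x) = x^T Pb x satisfies
   V' = -(x^T Q x + u^T R u) - g with g > 0 whenever x <> 0.  Integrating over
   [t0, +oo) and using V >= 0 gives J(u) + \int g <= V(x0), where \int g > 0 because
   g(t0) > 0. *)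

Section BilinearForm.
Context {R : comPzRingType}.

Definition bf {p q} (a : 'cV[R]_p) (M : 'M[R]_(p, q)) (b : 'cV[R]_q) : R :=
  (a^T *m M *m b) 0 0.

Lemma bfE {p q : nat} (a : 'cV[R]_p) (M : 'M[R]_(p, q)) (b : 'cV[R]_q) :
  bf a M b = \sum_(i < p) a i 0 * (M *m b) i 0.
Proof. by rewrite /bf -mulmxA mxE; apply: eq_bigr => i _; rewrite mxE. Qed.

Lemma bfDm {p q : nat} (a : 'cV[R]_p) (M1 M2 : 'M[R]_(p, q)) (b : 'cV[R]_q) :
  bf a (M1 + M2) b = bf a M1 b + bf a M2 b.
Proof. by rewrite /bf mulmxDr mulmxDl mxE. Qed.

Lemma bfNm {p q : nat} (a : 'cV[R]_p) (M : 'M[R]_(p, q)) (b : 'cV[R]_q) :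
  bf a (- M) b = - bf a M b.
Proof. by rewrite /bf mulmxN mulNmx mxE. Qed.

Lemma bfBm {p q : nat} (a : 'cV[R]_p) (M1 M2 : 'M[R]_(p, q)) (b : 'cV[R]_q) :
  bf a (M1 - M2) b = bf a M1 b - bf a M2 b.
Proof. by rewrite bfDm bfNm. Qed.

Lemma bfZm {p q : nat} (a : 'cV[R]_p) c (M : 'M[R]_(p, q)) (b : 'cV[R]_q) :
  bf a (c *: M) b = c * bf a M b.
Proof. by rewrite /bf -scalemxAr -scalemxAl mxE. Qed.

Lemma bfDl {p q : nat} (a1 a2 : 'cV[R]_p) (M : 'M[R]_(p, q)) (b : 'cV[R]_q) :
  bf (a1 + a2) M b = bf a1 M b + bf a2 M b.
Proof. by rewrite /bf linearD /= !mulmxDl mxE. Qed.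

Lemma bfDr {p q : nat} (a : 'cV[R]_p) (M : 'M[R]_(p, q)) (b1 b2 : 'cV[R]_q) :
  bf a M (b1 + b2) = bf a M b1 + bf a M b2.
Proof. by rewrite /bf mulmxDr mxE. Qed.

Lemma bfZl {p q : nat} c (a : 'cV[R]_p) (M : 'M[R]_(p, q)) (b : 'cV[R]_q) :
  bf (c *: a) M b = c * bf a M b.
Proof. by rewrite /bf linearZ /= -!scalemxAl mxE. Qed.

Lemma bfZr {p q : nat} (a : 'cV[R]_p) (M : 'M[R]_(p, q)) c (b : 'cV[R]_q) :
  bf a M (c *: b) = c * bf a M b.
Proof. by rewrite /bf -scalemxAr mxE. Qed.

Lemma bf0l {p q : nat} (M : 'M[R]_(p, q)) (b : 'cV[R]_q) : bf 0 M b = 0.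
Proof. by rewrite /bf trmx0 !mul0mx mxE. Qed.

Lemma bf0r {p q : nat} (a : 'cV[R]_p) (M : 'M[R]_(p, q)) : bf a M 0 = 0.
Proof. by rewrite /bf mulmx0 mxE. Qed.

Lemma bf_mulmxl {p q r : nat} (a : 'cV[R]_p) (M1 : 'M[R]_(p, q)) (M2 : 'M[R]_(q, r))
    (b : 'cV[R]_r) :
  bf a (M1 *m M2) b = bf (M1^T *m a) M2 b.
Proof. by rewrite /bf trmx_mul trmxK !mulmxA. Qed.

Lemma bf_mulmxr {p q r : nat} (a : 'cV[R]_p) (M1 : 'M[R]_(p, q)) (M2 : 'M[R]_(q, r))
    (b : 'cV[R]_r) :
  bf a (M1 *m M2) b = bf a M1 (M2 *m b).
Proof. by rewrite /bf !mulmxA. Qed.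

Lemma bf_tr {p q : nat} (a : 'cV[R]_p) (M : 'M[R]_(p, q)) (b : 'cV[R]_q) :
  bf a M b = bf b M^T a.
Proof. by rewrite /bf -[in RHS](trmxK a) -!trmx_mul mulmxA [RHS]mxE. Qed.

Lemma bf_sym {p : nat} {M : 'M[R]_p} : M^T = M -> forall a b, bf a M b = bf b M a.
Proof. by move=> sM a b; rewrite bf_tr sM. Qed.

Lemma bf_block {p q : nat} (X : 'M[R]_p) (Y : 'M[R]_(p, q)) (Z : 'M[R]_(q, p))
    (W : 'M[R]_q) (a : 'cV[R]_p) (b : 'cV[R]_q) :
  bf (col_mx a b) (block_mx X Y Z W) (col_mx a b) =
  bf a X a + bf b Z a + bf a Y b + bf b W b.
Proof. by rewrite /bf tr_col_mx mul_row_block mul_row_col !mulmxDl !mxE !addrA. Qed.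

End BilinearForm.

Section CurveDerivative.
Context {R : realType}.
Import numFieldNormedType.Exports.

Lemma continuous_of_is_derive {f df : R -> R} :
  (forall t, is_derive t (1 : R) f (df t)) -> continuous f.
Proof.
by move=> derf t; apply/differentiable_continuous/derivable1_diffP; case: (derf t).
Qed.

Lemma is_derive_mxP {p q : nat} (y : R -> 'M[R]_(p, q)) t (dy : 'M[R]_(p, q)) :
  is_derive t (1 : R) y dy <-> forall i j, is_derive t (1 : R) (fun s => y s i j) (dy i j).
Proof.
split=> [[dery <-] i j | dery].
  have derij := (derivable_mxP y t 1).1 dery i j.
  by apply: DeriveDef => //; rewrite derive_mx // mxE.
have dery' : derivable y t 1 by apply/derivable_mxP => i j; case: (dery i j).
apply: DeriveDef => //; apply/matrixP => i j.
by rewrite derive_mx // mxE derive_val.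
Qed.

Lemma is_derive_mulmxl {p q r : nat} (M : 'M[R]_(p, q)) {y : R -> 'M[R]_(q, r)} {t : R}
    {dy : 'M[R]_(q, r)} :
  is_derive t (1 : R) y dy -> is_derive t (1 : R) (fun s => M *m y s) (M *m dy).
Proof.
move=> /is_derive_mxP dery; apply/is_derive_mxP => i j.
have -> : (fun s => (M *m y s) i j) = \sum_(k < q) (M i k \*: fun s => y s k j).
  by apply/funext => s; rewrite fct_sumE mxE.
by rewrite mxE; apply: is_derive_sum => k; apply: is_deriveZ.
Qed.

Lemma is_derive_bf {p q : nat} (M : 'M[R]_(p, q)) {y : R -> 'cV[R]_p} {z : R -> 'cV[R]_q}
    {t : R} {dy : 'cV[R]_p} {dz : 'cV[R]_q} :
  is_derive t (1 : R) y dy -> is_derive t (1 : R) z dz ->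
  is_derive t (1 : R) (fun s => bf (y s) M (z s)) (bf dy M (z t) + bf (y t) M dz).
Proof.
move=> /is_derive_mxP dery /(is_derive_mulmxl M)/is_derive_mxP derMz.
have -> : (fun s => bf (y s) M (z s)) =
    \sum_(i < p) ((fun s => y s i 0) * fun s => (M *m z s) i 0).
  by apply/funext => s; rewrite fct_sumE bfE.
rewrite !bfE -big_split; apply: is_derive_sum => i.
apply: is_derive_eq (is_deriveM (dery i 0) (derMz i 0)) _.
by rewrite addrC mulrC.
Qed.

Lemma continuous_bf {p q : nat} (M : 'M[R]_(p, q)) {y : R -> 'cV[R]_p}
    {z : R -> 'cV[R]_q} {dy : R -> 'cV[R]_p} {dz : R -> 'cV[R]_q} :
  (forall t, is_derive t (1 : R) y (dy t)) -> (forall t, is_derive t (1 : R) z (dz t)) ->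
  continuous (fun t => bf (y t) M (z t)).
Proof. by move=> dery derz; apply: continuous_of_is_derive => t; apply: is_derive_bf. Qed.

End CurveDerivative.

Section LyapunovIntegral.
Context {R : realType}.
Local Open Scope classical_set_scope.
Import numFieldNormedType.Exports.

Lemma nondecreasing_of_is_derive_ge0 {F f : R -> R} :
  (forall t, is_derive t (1 : R) F (f t)) -> (forall t, 0 <= f t) ->
  {homo F : s t / s <= t}.
Proof.
move=> derF f_ge0 s t le_st.
have cF := continuous_of_is_derive derF.
have [c _ FtFs] := MVT_segment le_st (fun c _ => derF c) (continuous_subspaceT cF).
by rewrite -subr_ge0 FtFs mulr_ge0 // subr_ge0.
Qed.

Lemma measurable_EFin_continuous (f : R -> R) (D : set R) :
  continuous f -> measurable_fun D (EFin \o f).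
Proof.
move=> cf; apply/measurable_EFinP.
exact: measurable_funS measurableT (@subsetT _ D) (continuous_measurable_fun cf).
Qed.

Lemma integral_itvy_gt0 {g : R -> R} {a : R} :
  continuous g -> (forall t, 0 <= g t) -> 0 < g a ->
  (0 < \int[lebesgue_measure]_(t in `[a, +oo[) (g t)%:E)%E.
Proof.
move=> cg g_ge0 ga_gt0; set c := g a / 2.
have c_gt0 : 0 < c by rewrite divr_gt0.
have c_lt_ga : c < g a by rewrite /c; lra.
have [e /= e_gt0 near_a] := (@nbhs_ballP R R^o a _).1 (cvgr_gt _ (cg a) c c_lt_ga).
set d := e / 2; have d_gt0 : 0 < d by rewrite divr_gt0.
have c_lt_g t : a <= t <= a + d -> c < g t.
  move=> /andP[a_le_t t_le_ad]; apply: near_a.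
  by rewrite /ball /= ltr_norml; apply/andP; split; rewrite /d in t_le_ad; lra.
have mg D : measurable_fun D (EFin \o g) by exact: measurable_EFin_continuous.
have int_c_gt0 : (0 < \int[lebesgue_measure]_(t in `[a, (a + d)%R]) cst c%:E t)%E.
  rewrite integral_cst //= lebesgue_measure_itv /= lte_fin ltrDl d_gt0 /=.
  by rewrite -EFinB -EFinM lte_fin addrC addKr mulr_gt0.
apply: (lt_le_trans int_c_gt0).
apply: (@le_trans _ _ (\int[lebesgue_measure]_(t in `[a, (a + d)%R]) (g t)%:E)%E).
  apply: ge0_le_integral => //; [by move=> t _; rewrite lee_fin ltW | exact: mg |].
  by move=> t /=; rewrite in_itv /= => t_in; rewrite lee_fin ltW // c_lt_g.
apply: ge0_subset_integral => //; [exact: mg | by move=> t _; rewrite lee_fin |].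
by apply: subset_itvl; rewrite bnd_simp.
Qed.

Lemma lyapunov_integral_lt (V f g : R -> R) (t0 : R) :
  (forall t, is_derive t (1 : R) V (- (f t + g t))) ->
  continuous f -> continuous g ->
  (forall t, 0 <= f t) -> (forall t, 0 <= g t) -> 0 < g t0 -> (forall t, 0 <= V t) ->
  (\int[lebesgue_measure]_(t in `[t0, +oo[) (f t)%:E < (V t0)%:E)%E.
Proof.
move=> derV cf cg f_ge0 g_ge0 gt0_gt0 V_ge0.
pose h t := f t + g t; pose F t := - V t.
have ch : continuous h by move=> t; apply: continuousD; [exact: cf | exact: cg].
have h_ge0 t : 0 <= h t by rewrite addr_ge0.
have derF t : is_derive t (1 : R) F (h t).
  by apply: is_derive_eq (is_deriveN (derV t)) _; rewrite opprK.
have F_ndecr := nondecreasing_of_is_derive_ge0 derF h_ge0.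
have F_le0 t : F t <= 0 by rewrite /F oppr_le0.
have F_ub : has_ubound (range F) by exists 0 => _ [t _ <-].
set l := sup (range F).
have l_le0 : l <= 0 by apply: ge_sup; [exists (F 0), 0 | move=> _ [t _ <-]].
have int_h : (\int[lebesgue_measure]_(t in `[t0, +oo[) (h t)%:E = l%:E - (F t0)%:E)%E.
  apply: ge0_continuous_FTC2y (fun t _ => h_ge0 t) (continuous_subspaceT ch)
    (nondecreasing_cvgr F_ndecr F_ub) _ _ _.
  - by move=> t _; case: (derF t).
  - exact: cvg_at_right_filter (continuous_of_is_derive derF t0).
  - by move=> t _; rewrite derive1E; exact: derive_val.
have int_split : (\int[lebesgue_measure]_(t in `[t0, +oo[) (h t)%:E =
    \int[lebesgue_measure]_(t in `[t0, +oo[) (f t)%:E +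
    \int[lebesgue_measure]_(t in `[t0, +oo[) (g t)%:E)%E.
  rewrite -ge0_integralD //.
  - by move=> t _; rewrite lee_fin.
  - exact: measurable_EFin_continuous.
  - by move=> t _; rewrite lee_fin.
  - exact: measurable_EFin_continuous.
have int_g_gt0 := integral_itvy_gt0 cg g_ge0 gt0_gt0.
have int_f_ge0 : (0 <= \int[lebesgue_measure]_(t in `[t0, +oo[) (f t)%:E)%E.
  by apply: integral_ge0 => t _; rewrite lee_fin.
move: int_f_ge0 int_g_gt0 int_h; rewrite int_split /F.
case: (\int[_]_(_ in _) (f _)%:E)%E => [a||] //;
  case: (\int[_]_(_ in _) (g _)%:E)%E => [b||] //.
rewrite lee_fin lte_fin -EFinD -EFinB => a_ge0 b_gt0 [ab_eq].
rewrite lte_fin; lra.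
Qed.

End LyapunovIntegral.

Lemma col_mx_eq0 (R : nmodType) (p q r : nat) (a : 'M[R]_(p, r)) (b : 'M[R]_(q, r)) :
  (col_mx a b == 0) = (a == 0) && (b == 0).
Proof.
by rewrite -col_mx0; apply/eqP/andP => [/eq_col_mx[-> ->] | [/eqP-> /eqP->]].
Qed.

Section PositiveDefinite.
Context {R : realType} {n : nat}.
Implicit Types (M : 'M[R]_n) (v : 'cV[R]_n).

Lemma qform_bf M v : qform M v = bf v M v.
Proof. by []. Qed.

Lemma qform0 M : qform M 0 = 0.
Proof. by rewrite qform_bf bf0l. Qed.

Lemma posdef_qform_ge0 M v : posdef M -> 0 <= qform M v.
Proof. by move=> M_pd; have [->|/M_pd/ltW//] := eqVneq v 0; rewrite qform0. Qed.

Lemma posdef_unitmx M : posdef M -> M \in unitmx.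
Proof.
move=> M_pd; rewrite unitmxE unitfE; apply/negP => /det0P[v v_neq0 vM0].
have : v^T != 0 by rewrite -(inj_eq (@trmx_inj _ _ _)) trmxK trmx0.
by move=> /M_pd; rewrite /qform trmxK vM0 mul0mx mxE ltxx.
Qed.

End PositiveDefinite.

Section ClosedLoop.
Context {R : realType} {n m : nat}.
Variables (A : 'M[R]_n) (B : 'M[R]_(n, m)) (Q : 'M[R]_n) (Rm : 'M[R]_m) (P Pb : 'M[R]_n).
Hypotheses (Q_psd : possemidef Q) (Rm_pd : posdef Rm).
Hypotheses (Pb_sym : Pb^T = Pb) (Pb_pd : posdef Pb).
Hypothesis lmi_pd : posdef (lmi_matrix A B Q Rm P Pb).
Import numFieldNormedType.Exports.

Definition gain : 'M[R]_(m, n) := - (2^-1 *: (invmx Rm *m B^T *m (P + P^T))).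
Definition closed_loop : 'M[R]_n := A + B *m gain.

Lemma control_lawE v : control_law B Rm P v = gain *m v.
Proof. by rewrite /control_law /gain mulNmx -scalemxAl. Qed.

Lemma trmx_B_mul_gain : B^T *m (P + P^T) = - 2 *: (Rm *m gain).
Proof.
rewrite /gain mulmxN -scalemxAr !mulmxA mulmxV ?posdef_unitmx // mul1mx.
by rewrite scalerN scaleNr opprK scalerA mulfV ?scale1r // pnatr_eq0.
Qed.

Lemma closed_loop_dissipation v : v != 0 ->
  bf (closed_loop *m v) Pb v + bf v Pb (closed_loop *m v) <
  - (qform Q v + qform Rm (gain *m v)).
Proof.
move=> v_neq0; set u := gain *m v.
have := lmi_pd (col_mx 0 (col_mx v (2^-1 *: u))).
rewrite !col_mx_eq0 eqxx (negbTE v_neq0) /= => /(_ isT).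
rewrite qform_bf /lmi_matrix !bf_block !bf0l !bf0r !add0r.
set N := P + P^T - Pb - Pb^T.
have N_sym : N^T = N by rewrite /N !raddfB raddfD /= !trmxK Pb_sym [P^T + P]addrC.
rewrite (bf_tr v (N *m B)) trmx_mul N_sym.
rewrite bfNm /Gamma !bfDm bf_mulmxl trmxK bf_mulmxr.
rewrite /N !mulmxBr !bfBm trmx_B_mul_gain Pb_sym bf_mulmxl trmxK.
rewrite -!scalemxAr !bfZl !bfZm !bfZr bf_mulmxr -/u.
rewrite /closed_loop mulmxDl -mulmxA -/u !bfDl !bfDr !qform_bf.
rewrite [bf v Pb (A *m v)](bf_sym Pb_sym) [bf v Pb (B *m u)](bf_sym Pb_sym).
lra.
Qed.

Lemma closed_loop_cost_lt (x : R -> 'cV[R]_n) (t0 : R) :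
  x t0 != 0 -> (forall t, is_derive t (1 : R) x (closed_loop *m x t)) ->
  (\int[lebesgue_measure]_(t in `[t0, +oo[%classic)
      (qform Q (x t) + qform Rm (gain *m x t))%:E < (qform Pb (x t0))%:E)%E.
Proof.
move=> xt0_neq0 derx.
have derKx t := is_derive_mulmxl gain (derx t).
have derKcx t := is_derive_mulmxl closed_loop (derx t).
pose f t := qform Q (x t) + qform Rm (gain *m x t).
pose dV t := bf (closed_loop *m x t) Pb (x t) + bf (x t) Pb (closed_loop *m x t).
pose g t := - f t - dV t.
have g_gt0 t : x t != 0 -> 0 < g t.
  by move=> /closed_loop_dissipation; rewrite /g /dV /f; lra.
have cf : continuous f.
  move=> t; apply: (@continuousD _ _ _ (fun t => qform Q (x t))
    (fun t => qform Rm (gain *m x t))).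
  - exact: (continuous_bf Q derx derx t).
  - exact: (continuous_bf Rm derKx derKx t).
have cdV : continuous dV.
  move=> t; apply: (@continuousD _ _ _ (fun t => bf (closed_loop *m x t) Pb (x t))
    (fun t => bf (x t) Pb (closed_loop *m x t))).
  - exact: (continuous_bf Pb derKcx derx t).
  - exact: (continuous_bf Pb derx derKcx t).
apply: (@lyapunov_integral_lt _ (fun t => qform Pb (x t)) f g).
- move=> t; apply: is_derive_eq (is_derive_bf Pb (derx t) (derx t)) _.
  by rewrite /g /dV; lra.
- exact: cf.
- move=> t; apply: (@continuousB _ _ _ (fun t => - f t) dV).
  + by apply: continuousN; exact: cf.
  + exact: cdV.
- by move=> t; apply: addr_ge0; [exact: Q_psd | exact: posdef_qform_ge0].
- move=> t; have [xt0|/g_gt0/ltW//] := eqVneq (x t) 0.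
  by rewrite /g /dV /f xt0 mulmx0 !qform0 !bf0l !bf0r; lra.
- exact: g_gt0.
- by move=> t; apply: posdef_qform_ge0.
Qed.

End ClosedLoop.

Theorem proposition5 (R : realType) (n m : nat)
  (A : 'M[R]_n) (B : 'M[R]_(n, m)) (Q : 'M[R]_n) (Rm : 'M[R]_m)
  (P Pb : 'M[R]_n) (t0 : R) (x0 : 'cV[R]_n) (x : R -> 'cV[R]_n) :
  Q^T = Q -> possemidef Q ->
  Rm^T = Rm -> posdef Rm ->
  Pb^T = Pb -> posdef Pb ->
  posdef (lmi_matrix A B Q Rm P Pb) ->
  hurwitz (A - 2%:R^-1 *: Upsilon B Rm 1%:M P) ->
  strictly_convex_xu (s_fun A B Q Rm P Pb) ->
  x0 != 0 ->
  (* x is the closed-loop trajectory: x(t0) = x0, x' = A x + B u, u = control law *)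
  x t0 = x0 ->
  (forall t : R, is_derive t (1 : R) x (A *m x t + B *m control_law B Rm P (x t))) ->
  (cost Q Rm t0 x (fun t => control_law B Rm P (x t)) < (qform Pb x0)%:E)%E.
Proof.
move=> _ Q_psd _ Rm_pd Pb_sym Pb_pd lmi_pd _ _ x0_neq0 xt0 derx.
rewrite /cost -xt0.
under eq_integral do rewrite control_lawE.
apply: (closed_loop_cost_lt A) => //; first by rewrite xt0.
by move=> t; rewrite /closed_loop mulmxDl -mulmxA -control_lawE.
Qed.
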